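(* Chekanov tori are not Hamiltonian stationary: if $\gamma\subset\mathbb{C}$ is a smooth simple closed curve contained in an open half-plane whose boundary line passes through the origin (so $\gamma$ avoids the origin), then the twisted torus $L_\gamma$ is not Hamiltonian stationary.
   Context: Identify $\mathbb{C}^2\cong\mathbb{R}^4$ with its Euclidean metric and standard complex structure $J$ (multiplication by $i$). For a smooth regular simple closed curve $\gamma:\mathbb{R}/2\pi\mathbb{Z}\to\mathbb{C}\setminus\{0\}$, the twisted torus is $L_\gamma=\left\{\tfrac{1}{\sqrt2}\left(\gamma(\beta)e^{i\alpha},\gamma(\beta)e^{-i\alpha}\right):\alpha,\beta\in[0,2\pi)\right\}\subset\mathbb{C}^2$; when $\gamma$ lies in an open half-plane (bounded by a line through $0$) it is called a Chekanov torus. Let $g$ be the induced metric and $H$ the mean curvature vector (trace of the second fundamental form). $L_\gamma$ is Hamiltonian stationary if it is a critical point of area under all variations with variation field $J\nabla h$, $h\in C^\infty(L_\gamma)$; equivalently (Oh) $\mathrm{div}_g(JH)=0$. *)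

From Stdlib Require Import Reals Lra List.
From Coquelicot Require Import Coquelicot.
Open Scope R_scope.

(** Vectors of R^4 = C^2 are functions nat -> R, coordinates 0..3 being
    (Re z1, Im z1, Re z2, Im z2). *)
Definition vec4 := nat -> R.

Definition dot4 (u v : vec4) : R := u 0%nat * v 0%nat + u 1%nat * v 1%nat
  + u 2%nat * v 2%nat + u 3%nat * v 3%nat.

(** The standard complex structure J (multiplication by i on C^2). *)
Definition Jc (u : vec4) : vec4 := fun k =>
  match k with
  | 0%nat => - u 1%nat
  | 1%nat => u 0%nat
  | 2%nat => - u 3%nat
  | 3%nat => u 2%nat
  | _ => 0
  end.

Definition surf := R -> R -> vec4.

Definition dA (S : surf) (a b : R) : vec4 := fun k => Derive (fun x => S x b k) a.
Definition dB (S : surf) (a b : R) : vec4 := fun k => Derive (fun y => S a y k) b.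

Definition g11 S a b := dot4 (dA S a b) (dA S a b).
Definition g12 S a b := dot4 (dA S a b) (dB S a b).
Definition g22 S a b := dot4 (dB S a b) (dB S a b).
Definition gdet S a b := g11 S a b * g22 S a b - g12 S a b ^ 2.

Definition area (S : surf) : R :=
  RInt (fun b => RInt (fun a => sqrt (gdet S a b)) 0 (2 * PI)) 0 (2 * PI).

(** Gradient (w.r.t. g) of a function h(alpha,beta) on the surface,
    as a tangent vector in R^4:  grad h = g^{ij} d_j h d_i S. *)
Definition grad (S : surf) (h : R -> R -> R) (a b : R) : vec4 := fun k =>
  let ha := Derive (fun x => h x b) a in
  let hb := Derive (fun y => h a y) b in
  ((g22 S a b * ha - g12 S a b * hb) * dA S a b k
   + (g11 S a b * hb - g12 S a b * ha) * dB S a b k) / gdet S a b.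

Definition ham_var (S : surf) (h : R -> R -> R) (t : R) : surf :=
  fun a b k => S a b k + t * Jc (grad S h a b) k.

(** Iterated partial derivatives of a function of two variables
    (true = d/dalpha, false = d/dbeta). *)
Fixpoint iterD (l : list bool) (h : R -> R -> R) : R -> R -> R :=
  match l with
  | nil => h
  | true :: l' => fun a b => Derive (fun x => iterD l' h x b) a
  | false :: l' => fun a b => Derive (fun y => iterD l' h a y) b
  end.

Definition smooth2 (h : R -> R -> R) : Prop :=
  forall (l : list bool) (a b : R),
    ex_derive (fun x => iterD l h x b) a /\
    ex_derive (fun y => iterD l h a y) b /\
    continuous (fun p : R * R => iterD l h (fst p) (snd p)) (a, b).

(** Smooth functions on the torus R^2/(2pi Z)^2. *)
Definition torus_fun (h : R -> R -> R) : Prop :=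
  smooth2 h /\ (forall a b, h (a + 2 * PI) b = h a b)
            /\ (forall a b, h a (b + 2 * PI) = h a b).

Definition ham_stationary (S : surf) : Prop :=
  forall h, torus_fun h -> Derive (fun t => area (ham_var S h t)) 0 = 0.

(** The twisted torus L_gamma for gamma = gx + i gy:
    (1/sqrt2) (gamma(b) e^{i a}, gamma(b) e^{-i a}). *)
Definition twisted (gx gy : R -> R) : surf := fun a b k =>
  match k with
  | 0%nat => (gx b * cos a - gy b * sin a) / sqrt 2
  | 1%nat => (gx b * sin a + gy b * cos a) / sqrt 2
  | 2%nat => (gx b * cos a + gy b * sin a) / sqrt 2
  | 3%nat => (gy b * cos a - gx b * sin a) / sqrt 2
  | _ => 0
  end.

Definition smooth_closed_curve (gx gy : R -> R) : Prop :=
  (forall n x, ex_derive_n gx n x) /\ (forall n x, ex_derive_n gy n x) /\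
  (forall x, gx (x + 2 * PI) = gx x /\ gy (x + 2 * PI) = gy x) /\
  (forall x, Derive gx x <> 0 \/ Derive gy x <> 0) /\
  (forall s t, 0 <= s < 2 * PI -> 0 <= t < 2 * PI ->
     gx s = gx t -> gy s = gy t -> s = t).

Definition in_open_half_plane (gx gy : R -> R) : Prop :=
  exists c d : R, (c <> 0 \/ d <> 0) /\ forall s, c * gx s + d * gy s > 0.

(* Let th(beta) be the argument of gamma(beta) measured from the inner normal of
   the half-plane, so th' = (gamma x gamma')/|gamma|^2, and take the Hamiltonian h = th(beta)
   on L_gamma.  Its flow moves L_gamma through the twisted tori of the curves
   gamma + t i th' gamma'/|gamma'|^2, and L_gamma has area 2 pi times the integral of
   |gamma| |gamma'|.  Differentiating, the first variation of area is
   -4 pi times the integral of (gamma x gamma')^2 / (|gamma|^3 |gamma'|), up to the integral of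
   the derivative of the periodic function <gamma, gamma'>/(|gamma| |gamma'|), which vanishes.
   The remaining integrand is nonnegative, and positive where |gamma| is critical: there
   gamma is orthogonal to gamma', so |gamma x gamma'| = |gamma| |gamma'| > 0. *)

From Stdlib Require Import Reals Lra List FunctionalExtensionality.
From Coquelicot Require Import Coquelicot.
Open Scope R_scope.

Lemma Derive_periodic (f : R -> R) T x :
  (forall z, f (z + T) = f z) -> Derive f (x + T) = Derive f x.
Proof.
  intro Hf; change (Derive_n f 1 (x + T) = Derive f x).
  rewrite <- Derive_n_comp_trans; apply Derive_ext; auto.
Qed.

Lemma RInt_Derive_periodic (f : R -> R) T :
  (forall z, ex_derive f z) -> (forall z, continuous (Derive f) z) ->
  (forall z, f (z + T) = f z) -> RInt (Derive f) 0 T = 0.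
Proof.
  intros Df Cf Hf; rewrite RInt_Derive by auto.
  rewrite <- (Rplus_0_l T) at 1; rewrite Hf; apply Rminus_eq_0.
Qed.

Lemma continuity_pt_of_continuous (g : R -> R) x : continuous g x -> continuity_pt g x.
Proof. apply continuity_pt_filterlim. Qed.

Lemma RInt_gt_0_pt (g : R -> R) lo hi c :
  lo < hi -> (forall z, lo <= z <= hi -> continuous g z) ->
  (forall z, lo <= z <= hi -> 0 <= g z) -> lo <= c <= hi -> 0 < g c ->
  0 < RInt g lo hi.
Proof.
  intros lohi Cg g_ge0 Hc gc_pos.
  destruct (continuity_pt_of_continuous g c (Cg c Hc) (g c / 2)) as [dl [dl_pos Hdl]]; [lra|].
  set (a := Rmax lo (c - dl / 2)); set (b := Rmin hi (c + dl / 2)).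
  assert (Ha : lo <= a <= c) by (unfold a; split; [apply Rmax_l | apply Rmax_lub; lra]).
  assert (Hb : c <= b <= hi) by (unfold b; split; [apply Rmin_glb; lra | apply Rmin_l]).
  assert (ab : a < b).
  { unfold a, b; destruct (Rle_lt_dec lo (c - dl / 2)), (Rle_lt_dec hi (c + dl / 2));
      [rewrite Rmax_right, Rmin_left | rewrite Rmax_right, Rmin_right
      | rewrite Rmax_left, Rmin_left | rewrite Rmax_left, Rmin_right]; lra. }
  assert (Ig : forall u v, lo <= u -> u <= v -> v <= hi -> ex_RInt g u v).
  { intros u v Hu uv Hv; apply (ex_RInt_continuous (V := R_CompleteNormedModule)).
    intros z Hz; rewrite Rmin_left, Rmax_right in Hz by lra; apply Cg; lra. }
  rewrite <- (RInt_Chasles g lo a hi), <- (RInt_Chasles g a b hi) by (apply Ig; lra).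
  unfold plus; simpl.
  assert (0 <= RInt g lo a) by (apply RInt_ge_0; [lra | apply Ig; lra | intros; apply g_ge0; lra]).
  assert (0 <= RInt g b hi) by (apply RInt_ge_0; [lra | apply Ig; lra | intros; apply g_ge0; lra]).
  assert (0 < RInt g a b); [|lra].
  apply RInt_gt_0; auto; [|intros; apply Cg; lra].
  intros z Hz.
  assert (Hzc : Rabs (z - c) < dl).
  { apply Rabs_def1.
    - enough (z <= c + dl / 2) by lra. apply Rle_trans with b; [lra | apply Rmin_r].
    - enough (c - dl / 2 <= z) by lra. apply Rle_trans with a; [apply Rmax_r | lra]. }
  destruct (Req_dec z c) as [->|zc]; [auto|].
  assert (Hgz : R_dist (g z) (g c) < g c / 2) by (apply Hdl; repeat split; auto).
  unfold R_dist in Hgz; apply Rabs_lt_between in Hgz; lra.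
Qed.

Lemma sum_sq_pos u v : u <> 0 \/ v <> 0 -> 0 < u ^ 2 + v ^ 2.
Proof.
  intros [H|H].
  - pose proof (Rsqr_pos_lt u H); unfold Rsqr in *; nra.
  - pose proof (Rsqr_pos_lt v H); unfold Rsqr in *; nra.
Qed.

Lemma Derive_shift (f n : R -> R) t b : ex_derive f b -> ex_derive n b ->
  Derive (fun z => f z + t * n z) b = Derive f b + t * Derive n b.
Proof.
  intros Df Dn; apply is_derive_unique; auto_derive; auto.
  change (fun z => f z) with f; change (fun z => n z) with n; ring.
Qed.

Lemma continuity_2d_pt_snd (f : R -> R) u b :
  continuity_pt f b -> continuity_2d_pt (fun _ v => f v) u b.
Proof.
  intro Cf; apply (continuity_1d_2d_pt_comp f (fun _ v => v)); auto.
  apply continuity_2d_pt_id2.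
Qed.

Lemma continuity_pt_of_2d_snd (g : R -> R -> R) u b :
  continuity_2d_pt g u b -> continuity_pt (fun v => g u v) b.
Proof.
  intros Cg eps eps_pos.
  destruct (Cg (mkposreal eps eps_pos)) as [d Hd].
  exists d; split; [apply cond_pos|].
  intros z [_ Hz]; simpl in *; unfold R_dist in *.
  apply Hd; auto. rewrite Rminus_eq_0, Rabs_R0; apply cond_pos.
Qed.

Lemma continuity_2d_pt_pow2 (f : R -> R -> R) u b :
  continuity_2d_pt f u b -> continuity_2d_pt (fun u v => f u v ^ 2) u b.
Proof.
  intro Cf; apply continuity_2d_pt_ext with (fun u v => f u v * f u v).
  - intros; ring.
  - apply continuity_2d_pt_mult; auto.
Qed.

Lemma locally_pos_uniform (P : R -> R -> R) (lo hi : R) :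
  lo <= hi -> (forall u b, continuity_2d_pt P u b) ->
  (forall b, lo <= b <= hi -> 0 < P 0 b) ->
  locally 0 (fun u => forall b, lo <= b <= hi -> 0 < P u b).
Proof.
  intros lohi CP P0_pos.
  destruct (continuity_ab_min (fun b => P 0 b) lo hi) as [mx [Hmx Imx]]; auto.
  { intros; apply continuity_pt_of_2d_snd, CP. }
  assert (m_pos : 0 < P 0 mx) by auto.
  destruct (uniform_continuity_2d_1d' P lo hi 0 (fun b _ => CP 0 b) (mkposreal _ m_pos))
    as [d Hd].
  exists d; intros u Hu b Hb.
  assert (Hu' : Rabs (u - 0) < d) by exact Hu.
  apply Rabs_lt_between in Hu'; pose proof (cond_pos d).
  assert (Hclose : Rabs (P u b - P 0 b) < P 0 mx).
  { apply (Hd b 0 b u Hb); try lra.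
    rewrite Rminus_eq_0, Rabs_R0; apply cond_pos. }
  apply Rabs_lt_between in Hclose; specialize (Hmx b Hb); simpl in *; lra.
Qed.

Lemma is_derive_RInt_sqrt_param (P dP : R -> R -> R) (lo hi : R) :
  lo <= hi ->
  (forall u b, continuity_2d_pt P u b) ->
  (forall u b, continuity_2d_pt dP u b) ->
  (forall u b, is_derive (fun v => P v b) u (dP u b)) ->
  (forall u b, 0 <= P u b) ->
  (forall b, lo <= b <= hi -> 0 < P 0 b) ->
  is_derive (fun u => RInt (fun b => sqrt (P u b)) lo hi) 0
    (RInt (fun b => dP 0 b / (2 * sqrt (P 0 b))) lo hi).
Proof.
  intros lohi CP CdP DP P_ge0 P0_pos.
  assert (Dsqrt : forall u b, 0 < P u b ->
    is_derive (fun v => sqrt (P v b)) u (dP u b / (2 * sqrt (P u b)))).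
  { intros u b Hp; apply (is_derive_sqrt (fun v => P v b)); auto. }
  replace (RInt (fun b => dP 0 b / (2 * sqrt (P 0 b))) lo hi)
    with (RInt (fun b => Derive (fun u => sqrt (P u b)) 0) lo hi).
  2:{ apply RInt_ext; intros b Hb; apply is_derive_unique, Dsqrt, P0_pos.
      rewrite Rmin_left, Rmax_right in Hb; lra. }
  apply (is_derive_RInt_param (fun u b => sqrt (P u b))); rewrite ?Rmin_left, ?Rmax_right by lra.
  - apply filter_imp with (2 := locally_pos_uniform P lo hi lohi CP P0_pos).
    intros u Hu b Hb; eexists; apply Dsqrt, Hu, Hb.
  - intros b Hb.
    apply continuity_2d_pt_ext_loc with (fun u v => dP u v / (2 * sqrt (P u v))).
    + apply locally_2d_impl with (fun u v => P u v <> 0).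
      * apply locally_2d_forall; intros u v Hn; symmetry; apply is_derive_unique, Dsqrt.
        destruct (P_ge0 u v); [auto | congruence].
      * apply continuity_2d_pt_neq_0; auto. apply Rgt_not_eq, P0_pos, Hb.
    + apply continuity_2d_pt_mult; auto.
      apply continuity_2d_pt_inv.
      * apply continuity_2d_pt_mult; [apply continuity_2d_pt_const|].
        apply (continuity_1d_2d_pt_comp sqrt P); auto using continuity_pt_sqrt.
      * apply Rgt_not_eq, Rmult_lt_0_compat; [lra | apply sqrt_lt_R0; auto].
  - exists (mkposreal 1 Rlt_0_1); intros u _.
    apply (ex_RInt_continuous (V := R_CompleteNormedModule)); intros b _.
    apply continuity_pt_filterlim, (continuity_pt_of_2d_snd (fun u v => sqrt (P u v))).
    apply (continuity_1d_2d_pt_comp sqrt P); auto using continuity_pt_sqrt.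
Qed.

Fixpoint Ck (n : nat) (f : R -> R) : Prop :=
  match n with
  | O => True
  | S n => (forall x, ex_derive f x) /\ Ck n (Derive f)
  end.

Definition Cinf (f : R -> R) : Prop := forall n, Ck n f.

Lemma Ck_ext n f g : (forall x, f x = g x) -> Ck n f -> Ck n g.
Proof.
  revert f g; induction n as [|n IH]; intros f g E Hf; simpl in *; auto.
  destruct Hf as [Df Cf]; split.
  - intro x; apply ex_derive_ext with f; auto.
  - apply IH with (Derive f); auto. intro x; apply Derive_ext; auto.
Qed.

Lemma Ck_S n f : Ck (S n) f -> Ck n f.
Proof.
  revert f; induction n as [|n IH]; intros f Hf; simpl in *; auto.
  destruct Hf as [Df Cf]; split; auto.
Qed.

Lemma Ck_const n c : Ck n (fun _ => c).
Proof.
  revert c; induction n as [|n IH]; intro c; simpl; auto. split.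
  - intro; apply ex_derive_const.
  - apply Ck_ext with (fun _ => 0); auto. intro; symmetry; apply Derive_const.
Qed.

Lemma Ck_plus n f g : Ck n f -> Ck n g -> Ck n (fun x => f x + g x).
Proof.
  revert f g; induction n as [|n IH]; intros f g Hf Hg; simpl in *; auto.
  destruct Hf as [Df Cf], Hg as [Dg Cg]; split.
  - intro x; apply (ex_derive_plus f g x); auto.
  - apply Ck_ext with (fun x => Derive f x + Derive g x); auto.
    intro x; symmetry; apply Derive_plus; auto.
Qed.

Lemma Ck_opp n f : Ck n f -> Ck n (fun x => - f x).
Proof.
  revert f; induction n as [|n IH]; intros f Hf; simpl in *; auto.
  destruct Hf as [Df Cf]; split.
  - intro x; apply (ex_derive_opp f x); auto.
  - apply Ck_ext with (fun x => - Derive f x); auto.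
    intro x; symmetry; apply Derive_opp.
Qed.

Lemma Ck_mult n f g : Ck n f -> Ck n g -> Ck n (fun x => f x * g x).
Proof.
  revert f g; induction n as [|n IH]; intros f g Hf Hg; simpl; auto.
  pose proof (Ck_S n f Hf) as Hf'; pose proof (Ck_S n g Hg) as Hg'.
  destruct Hf as [Df Cf], Hg as [Dg Cg]; split.
  - intro x; apply ex_derive_mult; auto.
  - apply Ck_ext with (fun x => Derive f x * g x + f x * Derive g x).
    + intro x; symmetry; apply Derive_mult; auto.
    + apply Ck_plus; apply IH; auto.
Qed.

Lemma Ck_inv n g : (forall x, g x <> 0) -> Ck n g -> Ck n (fun x => / g x).
Proof.
  revert g; induction n as [|n IH]; intros g g0 Hg; simpl; auto.
  pose proof (Ck_S n g Hg) as Hg'.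
  destruct Hg as [Dg Cg]; split.
  - intro x; apply ex_derive_inv; auto.
  - apply Ck_ext with (fun x => - (Derive g x * (/ g x * / g x))).
    + intro x; symmetry; apply is_derive_unique; auto_derive; auto.
      change (fun z => g z) with g; field; auto.
    + apply Ck_opp, Ck_mult, Ck_mult; auto.
Qed.

Lemma Ck_sqrt n g : (forall x, 0 < g x) -> Ck n g -> Ck n (fun x => sqrt (g x)).
Proof.
  revert g; induction n as [|n IH]; intros g g0 Hg; simpl; auto.
  pose proof (Ck_S n g Hg) as Hg'.
  assert (sqrt_neq0 : forall x, sqrt (g x) <> 0) by (intro; apply Rgt_not_eq, sqrt_lt_R0; auto).
  destruct Hg as [Dg Cg]; split.
  - intro x; auto_derive; auto.
  - apply Ck_ext with (fun x => Derive g x * (/ 2 * / sqrt (g x))).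
    + intro x; symmetry; apply is_derive_unique; auto_derive; auto.
      change (fun z => g z) with g; field; auto.
    + apply Ck_mult, Ck_mult, Ck_inv; auto using Ck_const.
Qed.

Lemma Cinf_ext f g : (forall x, f x = g x) -> Cinf f -> Cinf g.
Proof. intros E Hf n; apply Ck_ext with f; auto. Qed.

Lemma Cinf_ex_derive f x : Cinf f -> ex_derive f x.
Proof. intro Hf; apply (Hf 1%nat). Qed.

Lemma Cinf_continuous f (x : R) : Cinf f -> continuous f x.
Proof. intro Hf; apply (ex_derive_continuous (K := R_AbsRing) (V := R_NormedModule)), Cinf_ex_derive, Hf. Qed.

Lemma Cinf_Derive f : Cinf f -> Cinf (Derive f).
Proof. intros Hf n; apply (Hf (S n)). Qed.

Lemma Cinf_of_Derive f : (forall x, ex_derive f x) -> Cinf (Derive f) -> Cinf f.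
Proof. intros Df Cf [|n]; simpl; auto. Qed.

Lemma Cinf_Derive_n f k : Cinf f -> Cinf (Derive_n f k).
Proof.
  intro Hf; induction k as [|k IH]; simpl; auto using Cinf_Derive.
Qed.

Lemma Cinf_of_ex_derive_n f : (forall n x, ex_derive_n f n x) -> Cinf f.
Proof.
  intros Hf n; revert f Hf; induction n as [|n IH]; intros f Hf; simpl; auto. split.
  - intro x; apply (Hf 1%nat x).
  - apply IH; intros [|k] x; simpl; auto.
    apply ex_derive_ext with (Derive_n f (S k)).
    + intro z; rewrite <- Nat.add_1_r, <- (Derive_n_comp f k 1); reflexivity.
    + apply (Hf (S (S k)) x).
Qed.

Lemma Cinf_const c : Cinf (fun _ => c).
Proof. intro n; apply Ck_const. Qed.

Lemma Cinf_plus f g : Cinf f -> Cinf g -> Cinf (fun x => f x + g x).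
Proof. intros Hf Hg n; apply Ck_plus; auto. Qed.

Lemma Cinf_opp f : Cinf f -> Cinf (fun x => - f x).
Proof. intros Hf n; apply Ck_opp; auto. Qed.

Lemma Cinf_minus f g : Cinf f -> Cinf g -> Cinf (fun x => f x - g x).
Proof. intros Hf Hg; apply Cinf_plus, Cinf_opp; auto. Qed.

Lemma Cinf_mult f g : Cinf f -> Cinf g -> Cinf (fun x => f x * g x).
Proof. intros Hf Hg n; apply Ck_mult; auto. Qed.

Lemma Cinf_pow2 f : Cinf f -> Cinf (fun x => f x ^ 2).
Proof. intro Hf; apply Cinf_ext with (fun x => f x * f x); [intro; ring | apply Cinf_mult; auto]. Qed.

Lemma Cinf_inv g : (forall x, g x <> 0) -> Cinf g -> Cinf (fun x => / g x).
Proof. intros g0 Hg n; apply Ck_inv; auto. Qed.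

Lemma Cinf_div f g : (forall x, g x <> 0) -> Cinf f -> Cinf g -> Cinf (fun x => f x / g x).
Proof. intros g0 Hf Hg; apply Cinf_mult, Cinf_inv; auto. Qed.

Lemma Cinf_sqrt g : (forall x, 0 < g x) -> Cinf g -> Cinf (fun x => sqrt (g x)).
Proof. intros g0 Hg n; apply Ck_sqrt; auto. Qed.

Ltac cinf := repeat first
  [ assumption | apply Cinf_const | apply Cinf_plus | apply Cinf_minus | apply Cinf_opp
  | apply Cinf_mult | apply Cinf_pow2 | apply Cinf_div | apply Cinf_inv | apply Cinf_sqrt
  | apply Cinf_Derive ].

Lemma iterD_beta (th : R -> R) (l : list bool) (a b : R) :
  iterD l (fun _ y => th y) a b = if forallb negb l then Derive_n th (length l) b else 0.
Proof.
  revert a b; induction l as [|[|] l IH]; intros a b; simpl; auto.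
  - rewrite (Derive_ext _ (fun _ => if forallb negb l then Derive_n th (length l) b else 0)).
    + apply Derive_const.
    + intro; apply IH.
  - rewrite (Derive_ext _ (fun y => if forallb negb l then Derive_n th (length l) y else 0)).
    + destruct (forallb negb l); simpl; auto using Derive_const.
    + intro; apply IH.
Qed.

Lemma torus_fun_beta (th : R -> R) :
  Cinf th -> (forall b, th (b + 2 * PI) = th b) -> torus_fun (fun _ b => th b).
Proof.
  intros Hth Hper; split; [|split; auto].
  intros l a b.
  set (D := fun y => if forallb negb l then Derive_n th (length l) y else 0).
  assert (CD : Cinf D) by (unfold D; destruct (forallb negb l); auto using Cinf_Derive_n, Cinf_const).
  split; [|split].
  - apply ex_derive_ext with (fun _ => D b); [intro; symmetry; apply iterD_beta|].
    apply ex_derive_const.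
  - apply ex_derive_ext with D; [intro; symmetry; apply iterD_beta|].
    apply Cinf_ex_derive, CD.
  - apply continuous_ext with (fun p : R * R => D (snd p)); [intro; symmetry; apply iterD_beta|].
    apply (continuous_comp (fun p : R * R => snd p) D); [apply continuous_snd|].
    apply Cinf_continuous, CD.
Qed.

(** * Twisted tori *)

Lemma div_sqrt2_mul u v : u / sqrt 2 * (v / sqrt 2) = u * v / 2.
Proof.
  assert (E : sqrt 2 * sqrt 2 = 2) by (apply sqrt_sqrt; lra).
  assert (sqrt 2 <> 0) by (apply Rgt_not_eq, sqrt_lt_R0; lra).
  rewrite <- E at 3; field; auto.
Qed.

Lemma dA_twisted (x y : R -> R) a b :
  dA (twisted x y) a b 0%nat = (- (x b * sin a) - y b * cos a) / sqrt 2 /\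
  dA (twisted x y) a b 1%nat = (x b * cos a - y b * sin a) / sqrt 2 /\
  dA (twisted x y) a b 2%nat = (- (x b * sin a) + y b * cos a) / sqrt 2 /\
  dA (twisted x y) a b 3%nat = (- (y b * sin a) - x b * cos a) / sqrt 2.
Proof.
  unfold dA, twisted; repeat split; apply is_derive_unique; auto_derive; auto;
    field; apply Rgt_not_eq, sqrt_lt_R0; lra.
Qed.

Lemma dB_twisted (x y : R -> R) a b : ex_derive x b -> ex_derive y b ->
  dB (twisted x y) a b 0%nat = (Derive x b * cos a - Derive y b * sin a) / sqrt 2 /\
  dB (twisted x y) a b 1%nat = (Derive x b * sin a + Derive y b * cos a) / sqrt 2 /\
  dB (twisted x y) a b 2%nat = (Derive x b * cos a + Derive y b * sin a) / sqrt 2 /\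
  dB (twisted x y) a b 3%nat = (Derive y b * cos a - Derive x b * sin a) / sqrt 2.
Proof.
  intros Dx Dy; unfold dB, twisted; repeat split; apply is_derive_unique; auto_derive; auto;
    change (fun z => x z) with x; change (fun z => y z) with y;
    field; apply Rgt_not_eq, sqrt_lt_R0; lra.
Qed.

Definition sqnorm (x y : R -> R) (b : R) : R := x b ^ 2 + y b ^ 2.

Lemma twisted_metric (x y : R -> R) a b : ex_derive x b -> ex_derive y b ->
  g11 (twisted x y) a b = sqnorm x y b /\
  g12 (twisted x y) a b = 0 /\
  g22 (twisted x y) a b = sqnorm (Derive x) (Derive y) b.
Proof.
  intros Dx Dy.
  destruct (dA_twisted x y a b) as (A0 & A1 & A2 & A3).
  destruct (dB_twisted x y a b Dx Dy) as (B0 & B1 & B2 & B3).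
  unfold g11, g12, g22, dot4, sqnorm.
  rewrite A0, A1, A2, A3, B0, B1, B2, B3, !div_sqrt2_mul.
  pose proof (sin2_cos2 a) as Hsc; unfold Rsqr in Hsc.
  repeat split.
  - rewrite <- (Rmult_1_r (x b ^ 2 + y b ^ 2)), <- Hsc at 1; field.
  - field.
  - rewrite <- (Rmult_1_r (Derive x b ^ 2 + Derive y b ^ 2)), <- Hsc at 1; field.
Qed.

Lemma twisted_gdet (x y : R -> R) a b : ex_derive x b -> ex_derive y b ->
  gdet (twisted x y) a b = sqnorm x y b * sqnorm (Derive x) (Derive y) b.
Proof.
  intros Dx Dy; destruct (twisted_metric x y a b Dx Dy) as (E11 & E12 & E22).
  unfold gdet; rewrite E11, E12, E22; ring.
Qed.

(* The velocity i th' gamma' / |gamma'|^2 of gamma under the flow of the Hamiltonian th(beta). *)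
Definition normal_x (th x y : R -> R) (b : R) : R :=
  - (Derive th b / sqnorm (Derive x) (Derive y) b * Derive y b).
Definition normal_y (th x y : R -> R) (b : R) : R :=
  Derive th b / sqnorm (Derive x) (Derive y) b * Derive x b.

Lemma ham_var_twisted (x y th : R -> R) t :
  (forall b, ex_derive x b) -> (forall b, ex_derive y b) ->
  (forall b, sqnorm x y b <> 0) -> (forall b, sqnorm (Derive x) (Derive y) b <> 0) ->
  ham_var (twisted x y) (fun _ b => th b) t =
  twisted (fun b => x b + t * normal_x th x y b) (fun b => y b + t * normal_y th x y b).
Proof.
  intros Dx Dy r0 s0.
  apply functional_extensionality; intro a.
  apply functional_extensionality; intro b.
  apply functional_extensionality; intro k.
  unfold ham_var, grad; cbv zeta.
  rewrite Derive_const; change (fun z => th z) with th.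
  destruct (twisted_metric x y a b (Dx b) (Dy b)) as (E11 & E12 & E22).
  unfold gdet; rewrite E11, E12, E22.
  destruct (dB_twisted x y a b (Dx b) (Dy b)) as (B0 & B1 & B2 & B3).
  specialize (r0 b); specialize (s0 b).
  assert (sqrt 2 <> 0) by (apply Rgt_not_eq, sqrt_lt_R0; lra).
  unfold normal_x, normal_y.
  destruct k as [|[|[|[|k]]]]; unfold Jc.
  - rewrite B1; unfold twisted; field; auto.
  - rewrite B0; unfold twisted; field; auto.
  - rewrite B3; unfold twisted; field; auto.
  - rewrite B2; unfold twisted; field; auto.
  - unfold twisted; ring.
Qed.

Definition area_density (x y : R -> R) (b : R) : R :=
  sqrt (sqnorm x y b * sqnorm (Derive x) (Derive y) b).

Lemma area_density_sq (x y : R -> R) b :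
  area_density x y b ^ 2 = sqnorm x y b * sqnorm (Derive x) (Derive y) b.
Proof.
  apply pow2_sqrt, Rmult_le_pos; unfold sqnorm; apply Rplus_le_le_0_compat; apply pow2_ge_0.
Qed.

Lemma area_twisted (x y : R -> R) : Cinf x -> Cinf y ->
  area (twisted x y) = 2 * PI * RInt (area_density x y) 0 (2 * PI).
Proof.
  intros Cx Cy; unfold area.
  rewrite <- (RInt_scal (V := R_CompleteNormedModule)).
  - apply RInt_ext; intros b _.
    rewrite (RInt_ext _ (fun _ => area_density x y b)).
    + rewrite RInt_const; unfold scal; simpl; unfold mult; simpl; ring.
    + intros a _; unfold area_density; rewrite twisted_gdet; auto using Cinf_ex_derive.
  - apply (ex_RInt_continuous (V := R_CompleteNormedModule)); intros b _.
    apply continuous_sqrt_comp, Cinf_continuous; unfold sqnorm; cinf.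
Qed.

(** * First variation of area along the angle Hamiltonian *)

Definition area_variation (x y nx ny : R -> R) (b : R) : R :=
  ((x b * nx b + y b * ny b) * sqnorm (Derive x) (Derive y) b
   + sqnorm x y b * (Derive x b * Derive nx b + Derive y b * Derive ny b))
  / area_density x y b.

Ltac continuity_2d := repeat first
  [ apply continuity_2d_pt_plus | apply continuity_2d_pt_mult | apply continuity_2d_pt_pow2
  | apply continuity_2d_pt_id1 | apply continuity_2d_pt_const
  | apply continuity_2d_pt_snd, continuity_pt_of_continuous, Cinf_continuous; cinf ].

Lemma is_derive_area_twisted_shift (x y nx ny : R -> R) :
  Cinf x -> Cinf y -> Cinf nx -> Cinf ny ->
  (forall b, 0 < sqnorm x y b) -> (forall b, 0 < sqnorm (Derive x) (Derive y) b) ->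
  is_derive (fun t => area (twisted (fun b => x b + t * nx b) (fun b => y b + t * ny b))) 0
    (2 * PI * RInt (area_variation x y nx ny) 0 (2 * PI)).
Proof.
  intros Cx Cy Cnx Cny r_pos s_pos.
  set (Q1 := fun u b => (x b + u * nx b) ^ 2 + (y b + u * ny b) ^ 2).
  set (Q2 := fun u b => (Derive x b + u * Derive nx b) ^ 2 + (Derive y b + u * Derive ny b) ^ 2).
  set (dQ1 := fun u b => 2 * ((x b + u * nx b) * nx b + (y b + u * ny b) * ny b)).
  set (dQ2 := fun u b => 2 * ((Derive x b + u * Derive nx b) * Derive nx b
                              + (Derive y b + u * Derive ny b) * Derive ny b)).
  assert (Q0 : forall b, Q1 0 b * Q2 0 b = sqnorm x y b * sqnorm (Derive x) (Derive y) b)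
    by (intro; unfold Q1, Q2, sqnorm; ring).
  apply is_derive_ext with (fun t => 2 * PI * RInt (fun b => sqrt (Q1 t b * Q2 t b)) 0 (2 * PI)).
  { intro t; rewrite area_twisted by cinf; f_equal.
    apply RInt_ext; intros b _; unfold area_density, sqnorm, Q1, Q2.
    rewrite !Derive_shift by (apply Cinf_ex_derive; auto); reflexivity. }
  apply is_derive_scal.
  assert (Evar : forall b, (dQ1 0 b * Q2 0 b + Q1 0 b * dQ2 0 b) / (2 * sqrt (Q1 0 b * Q2 0 b))
                         = area_variation x y nx ny b).
  { intro b; unfold area_variation, area_density; rewrite Q0.
    assert (0 < sqrt (sqnorm x y b * sqnorm (Derive x) (Derive y) b))
      by (apply sqrt_lt_R0, Rmult_lt_0_compat; auto).
    unfold sqnorm in *; unfold dQ1, dQ2, Q1, Q2; field; lra. }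
  replace (RInt (area_variation x y nx ny) 0 (2 * PI)) with
    (RInt (fun b => (dQ1 0 b * Q2 0 b + Q1 0 b * dQ2 0 b) / (2 * sqrt (Q1 0 b * Q2 0 b))) 0 (2 * PI))
    by (apply RInt_ext; intros b _; apply Evar).
  apply (is_derive_RInt_sqrt_param (fun u b => Q1 u b * Q2 u b)
           (fun u b => dQ1 u b * Q2 u b + Q1 u b * dQ2 u b)).
  - pose proof PI_RGT_0; lra.
  - intros u b; unfold Q1, Q2; continuity_2d.
  - intros u b; unfold dQ1, dQ2, Q1, Q2; continuity_2d.
  - intros u b; unfold dQ1, dQ2, Q1, Q2; auto_derive; auto; ring.
  - intros u b; unfold Q1, Q2; apply Rmult_le_pos; apply Rplus_le_le_0_compat; apply pow2_ge_0.
  - intros b _; rewrite Q0; apply Rmult_lt_0_compat; auto.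
Qed.

Definition wedge (x y : R -> R) (b : R) : R := x b * Derive y b - y b * Derive x b.
Definition radial (x y : R -> R) (b : R) : R := x b * Derive x b + y b * Derive y b.

Definition wedge_term (x y : R -> R) (b : R) : R :=
  wedge x y b ^ 2 / (sqnorm x y b * area_density x y b).
Definition radial_term (x y : R -> R) (b : R) : R := radial x y b / area_density x y b.

Lemma wedge_sq_add_radial_sq (x y : R -> R) b :
  wedge x y b ^ 2 + radial x y b ^ 2 = sqnorm x y b * sqnorm (Derive x) (Derive y) b.
Proof. unfold wedge, radial, sqnorm; ring. Qed.

(* [2 * radial x y] is the derivative of the periodic function [sqnorm x y]. *)
Lemma exists_radial_eq_0 (x y : R -> R) :
  (forall b, ex_derive x b) -> (forall b, ex_derive y b) ->
  x (2 * PI) = x 0 -> y (2 * PI) = y 0 ->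
  exists c, 0 <= c <= 2 * PI /\ radial x y c = 0.
Proof.
  intros Dx Dy x_per y_per; pose proof PI_RGT_0.
  destruct (MVT_gen (sqnorm x y) 0 (2 * PI) (fun b => 2 * radial x y b)) as [c [Hc Hmvt]].
  - intros b _; unfold sqnorm, radial; auto_derive; [auto|].
    change (fun z => x z) with x; change (fun z => y z) with y; ring.
  - intros b _; apply continuity_pt_of_continuous.
    apply (ex_derive_continuous (K := R_AbsRing) (V := R_NormedModule)).
    unfold sqnorm; auto_derive; auto.
  - rewrite Rmin_left, Rmax_right in Hc by lra.
    unfold sqnorm in Hmvt; rewrite x_per, y_per in Hmvt.
    exists c; split; auto; nra.
Qed.

Section AngleVariation.

Variables x y : R -> R.
Hypotheses (Cx : Cinf x) (Cy : Cinf y).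
Hypothesis r_pos : forall b, 0 < sqnorm x y b.
Hypothesis s_pos : forall b, 0 < sqnorm (Derive x) (Derive y) b.

Let r_neq0 b : sqnorm x y b <> 0. Proof. apply Rgt_not_eq, r_pos. Qed.
Let s_neq0 b : sqnorm (Derive x) (Derive y) b <> 0. Proof. apply Rgt_not_eq, s_pos. Qed.

Let density_pos b : 0 < area_density x y b.
Proof. apply sqrt_lt_R0, Rmult_lt_0_compat; auto. Qed.

Lemma Cinf_radial_term : Cinf (radial_term x y).
Proof.
  unfold radial_term, radial, area_density; apply Cinf_div.
  - intro; apply Rgt_not_eq, density_pos.
  - cinf.
  - apply Cinf_sqrt; [intro; apply Rmult_lt_0_compat; auto | unfold sqnorm; cinf].
Qed.

Lemma Cinf_wedge_term : Cinf (wedge_term x y).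
Proof.
  unfold wedge_term, wedge; apply Cinf_div.
  - intro; apply Rgt_not_eq, Rmult_lt_0_compat; [apply r_pos | apply density_pos].
  - cinf.
  - apply Cinf_mult; [unfold sqnorm; cinf|].
    unfold area_density; apply Cinf_sqrt; [intro; apply Rmult_lt_0_compat; auto | unfold sqnorm; cinf].
Qed.

Lemma is_derive_area_density b :
  is_derive (area_density x y) b
    ((2 * radial x y b * sqnorm (Derive x) (Derive y) b
      + sqnorm x y b * (2 * (Derive x b * Derive (Derive x) b + Derive y b * Derive (Derive y) b)))
     / (2 * area_density x y b)).
Proof.
  apply (is_derive_sqrt (fun z => sqnorm x y z * sqnorm (Derive x) (Derive y) z)).
  - unfold sqnorm, radial; auto_derive; [repeat split; apply Cinf_ex_derive; cinf|].
    change (fun z => Derive x z) with (Derive x); change (fun z => Derive y z) with (Derive y).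
    change (fun z => x z) with x; change (fun z => y z) with y; ring.
  - apply Rmult_lt_0_compat; auto.
Qed.

Lemma Derive_radial_term b :
  Derive (radial_term x y) b =
  (sqnorm (Derive x) (Derive y) b + x b * Derive (Derive x) b + y b * Derive (Derive y) b)
    / area_density x y b
  - radial x y b * (2 * radial x y b * sqnorm (Derive x) (Derive y) b
      + sqnorm x y b * (2 * (Derive x b * Derive (Derive x) b + Derive y b * Derive (Derive y) b)))
    / (2 * area_density x y b * (sqnorm x y b * sqnorm (Derive x) (Derive y) b)).
Proof.
  apply is_derive_unique.
  apply is_derive_ext with (fun z => radial x y z * / area_density x y z); [reflexivity|].
  assert (DV : is_derive (radial x y) b
    (sqnorm (Derive x) (Derive y) b + x b * Derive (Derive x) b + y b * Derive (Derive y) b)).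
  { unfold radial, sqnorm; auto_derive; [repeat split; apply Cinf_ex_derive; cinf|].
    change (fun z => Derive x z) with (Derive x); change (fun z => Derive y z) with (Derive y).
    change (fun z => x z) with x; change (fun z => y z) with y; ring. }
  pose proof (is_derive_inv _ _ _ (is_derive_area_density b) (Rgt_not_eq _ _ (density_pos b))) as DI.
  pose proof (is_derive_mult _ _ _ _ _ DV DI Rmult_comm) as DM.
  rewrite area_density_sq in DM.
  refine (eq_ind _ (fun l => is_derive _ b l) DM _ _).
  unfold plus, mult; simpl.
  field; repeat split; first [apply r_neq0 | apply s_neq0 | apply Rgt_not_eq, density_pos].
Qed.

Hypotheses (x_per : forall b, x (b + 2 * PI) = x b) (y_per : forall b, y (b + 2 * PI) = y b).

Lemma radial_term_periodic b : radial_term x y (b + 2 * PI) = radial_term x y b.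
Proof.
  unfold radial_term, radial, area_density, sqnorm.
  rewrite x_per, y_per, !(Derive_periodic _ _ b) by auto; reflexivity.
Qed.

Lemma RInt_wedge_term_pos : 0 < RInt (wedge_term x y) 0 (2 * PI).
Proof.
  pose proof PI_RGT_0.
  assert (Hper0 : x (2 * PI) = x 0 /\ y (2 * PI) = y 0)
    by (rewrite <- (Rplus_0_l (2 * PI)); auto).
  destruct Hper0 as [x_per0 y_per0].
  destruct (exists_radial_eq_0 x y) as [c [Hc Vc]]; auto using Cinf_ex_derive.
  apply RInt_gt_0_pt with c; [lra | intros; apply Cinf_continuous, Cinf_wedge_term | | auto |].
  - intros z _; apply Rdiv_le_0_compat; [apply pow2_ge_0 | apply Rmult_lt_0_compat; auto].
  - apply Rdiv_lt_0_compat; [|apply Rmult_lt_0_compat; auto].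
    pose proof (wedge_sq_add_radial_sq x y c) as E; rewrite Vc in E.
    pose proof (Rmult_lt_0_compat _ _ (r_pos c) (s_pos c)); nra.
Qed.

Variable th : R -> R.
Hypothesis Cth : Cinf th.
Hypothesis th_angle : forall b, Derive th b = wedge x y b / sqnorm x y b.

Lemma Cinf_normal_x : Cinf (normal_x th x y).
Proof. unfold normal_x, sqnorm in *; cinf. Qed.

Lemma Cinf_normal_y : Cinf (normal_y th x y).
Proof. unfold normal_y, sqnorm in *; cinf. Qed.

Lemma area_variation_normal b :
  area_variation x y (normal_x th x y) (normal_y th x y) b
  = -2 * wedge_term x y b + Derive (radial_term x y) b.
Proof.
  set (phi := fun z => Derive th z / sqnorm (Derive x) (Derive y) z).
  assert (Cphi : Cinf phi) by (unfold phi, sqnorm in *; cinf).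
  assert (Dnx : Derive (normal_x th x y) b
                = - (Derive phi b * Derive y b + phi b * Derive (Derive y) b)).
  { change (normal_x th x y) with (fun z => - (phi z * Derive y z)).
    apply is_derive_unique; auto_derive; [repeat split; apply Cinf_ex_derive; cinf|].
    change (fun z => phi z) with phi; change (fun z => Derive y z) with (Derive y); ring. }
  assert (Dny : Derive (normal_y th x y) b
                = Derive phi b * Derive x b + phi b * Derive (Derive x) b).
  { change (normal_y th x y) with (fun z => phi z * Derive x z).
    apply is_derive_unique; auto_derive; [repeat split; apply Cinf_ex_derive; cinf|].
    change (fun z => phi z) with phi; change (fun z => Derive x z) with (Derive x); ring. }
  unfold area_variation; rewrite Dnx, Dny, Derive_radial_term.
  unfold wedge_term, normal_x, normal_y, phi; rewrite th_angle.
  unfold wedge, radial, sqnorm.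
  field; repeat split; first [apply r_neq0 | apply s_neq0 | apply Rgt_not_eq, density_pos].
Qed.

(* The radial term integrates to zero, being the derivative of a periodic function. *)
Lemma is_derive_area_ham_angle :
  is_derive (fun t => area (ham_var (twisted x y) (fun _ b => th b) t)) 0
    (- (4 * PI) * RInt (wedge_term x y) 0 (2 * PI)).
Proof.
  apply is_derive_ext with (fun t => area (twisted (fun b => x b + t * normal_x th x y b)
                                                   (fun b => y b + t * normal_y th x y b))).
  { intro t; rewrite ham_var_twisted; auto using Cinf_ex_derive. }
  replace (- (4 * PI) * RInt (wedge_term x y) 0 (2 * PI))
    with (2 * PI * RInt (area_variation x y (normal_x th x y) (normal_y th x y)) 0 (2 * PI)).
  { apply is_derive_area_twisted_shift; auto using Cinf_normal_x, Cinf_normal_y. }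
  assert (Iw : ex_RInt (wedge_term x y) 0 (2 * PI)).
  { apply (ex_RInt_continuous (V := R_CompleteNormedModule)); intros.
    apply Cinf_continuous, Cinf_wedge_term. }
  assert (Iu : ex_RInt (Derive (radial_term x y)) 0 (2 * PI)).
  { apply (ex_RInt_continuous (V := R_CompleteNormedModule)); intros.
    apply Cinf_continuous, Cinf_Derive, Cinf_radial_term. }
  rewrite (RInt_ext _ (fun b => -2 * wedge_term x y b + Derive (radial_term x y) b))
    by (intros; apply area_variation_normal).
  rewrite (RInt_plus (V := R_CompleteNormedModule) (fun b => -2 * wedge_term x y b));
    [| apply (ex_RInt_scal (V := R_CompleteNormedModule)); auto | auto].
  rewrite (RInt_scal (V := R_CompleteNormedModule)) by auto.
  rewrite (RInt_Derive_periodic (radial_term x y)).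
  - unfold plus, scal; simpl; unfold mult; simpl; ring.
  - intro; apply Cinf_ex_derive, Cinf_radial_term.
  - intro; apply Cinf_continuous, Cinf_Derive, Cinf_radial_term.
  - apply radial_term_periodic.
Qed.

End AngleVariation.

(** * The angle of a curve in a half-plane *)

(* The argument of [(x, y)] measured from the direction [(c, d)]; [atan] suffices because the
   curve stays in the half-plane [c x + d y > 0]. *)
Definition half_plane_angle (c d : R) (x y : R -> R) (b : R) : R :=
  atan ((c * y b - d * x b) / (c * x b + d * y b)).

Section HalfPlaneAngle.

Variables (c d : R) (x y : R -> R).
Hypotheses (Cx : Cinf x) (Cy : Cinf y).
Hypothesis half_plane : forall b, c * x b + d * y b > 0.

Lemma sqnorm_pos_half_plane b : 0 < sqnorm x y b.
Proof.
  pose proof (half_plane b) as Hb; unfold sqnorm; apply sum_sq_pos.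
  destruct (Req_dec (x b) 0) as [E|E]; [right; intro F; rewrite E, F in Hb; lra | left; auto].
Qed.

Lemma is_derive_half_plane_angle b :
  is_derive (half_plane_angle c d x y) b (wedge x y b / sqnorm x y b).
Proof.
  pose proof (half_plane b) as Hb.
  assert (0 < (c * x b + d * y b) ^ 2 + (c * y b - d * x b) ^ 2)
    by (apply sum_sq_pos; left; lra).
  pose proof (sqnorm_pos_half_plane b).
  unfold half_plane_angle; auto_derive; [repeat split; auto using Cinf_ex_derive; lra|].
  change (fun z => x z) with x; change (fun z => y z) with y.
  unfold wedge, sqnorm in *; field; repeat split; auto; lra.
Qed.

Lemma Cinf_half_plane_angle : Cinf (half_plane_angle c d x y).
Proof.
  assert (r0 : forall b, sqnorm x y b <> 0) by (intro; apply Rgt_not_eq, sqnorm_pos_half_plane).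
  apply Cinf_of_Derive.
  - intro b; eexists; apply is_derive_half_plane_angle.
  - apply Cinf_ext with (fun b => wedge x y b / sqnorm x y b).
    + intro b; symmetry; apply is_derive_unique, is_derive_half_plane_angle.
    + unfold wedge, sqnorm in *; cinf.
Qed.

End HalfPlaneAngle.

Theorem mainTheorem2 (gx gy : R -> R) :
  smooth_closed_curve gx gy ->
  in_open_half_plane gx gy ->
  ~ ham_stationary (twisted gx gy).
Proof.
  intros [Dx [Dy [Hper [Hreg _]]]] [c [d [_ Hhalf]]] Hstat.
  assert (Cx : Cinf gx) by (apply Cinf_of_ex_derive_n; auto).
  assert (Cy : Cinf gy) by (apply Cinf_of_ex_derive_n; auto).
  pose proof (fun b => proj1 (Hper b)) as x_per; pose proof (fun b => proj2 (Hper b)) as y_per.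
  pose proof (sqnorm_pos_half_plane c d gx gy Hhalf) as r_pos.
  assert (s_pos : forall b, 0 < sqnorm (Derive gx) (Derive gy) b)
    by (intro; apply sum_sq_pos; auto).
  set (th := half_plane_angle c d gx gy).
  assert (Cth : Cinf th) by (apply Cinf_half_plane_angle; auto).
  assert (Hth : torus_fun (fun _ b => th b)).
  { apply torus_fun_beta; auto.
    intro b; unfold th, half_plane_angle; rewrite x_per, y_per; reflexivity. }
  pose proof (is_derive_area_ham_angle gx gy Cx Cy r_pos s_pos x_per y_per th Cth
                (fun b => is_derive_unique _ _ _ (is_derive_half_plane_angle c d gx gy Cx Cy Hhalf b)))
    as Hvar.
  assert (- (4 * PI) * RInt (wedge_term gx gy) 0 (2 * PI) = 0)
    by (rewrite <- (is_derive_unique _ _ _ Hvar); exact (Hstat _ Hth)).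
  pose proof (RInt_wedge_term_pos gx gy Cx Cy r_pos s_pos x_per y_per).
  pose proof PI_RGT_0; nra.
Qed.
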